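(* Let $(V,E,c,p)$ be a PCSTP instance and $v_i,v_j\in V$. If $$p(v_i) > d^-_{pc}(v_i,v_j),$$ then every optimal solution that contains $v_j$ also contains $v_i$.
   Context: A PCSTP instance $(V,E,c,p)$: finite undirected connected graph $G=(V,E)$, $c:E\to\mathbb{Q}_{>0}$, $p:V\to\mathbb{Q}_{\ge0}$. For a tree $S\subseteq G$ (connected acyclic subgraph with at least one vertex), $C(S):=\sum_{e\in E(S)}c(e)+\sum_{v\in V\setminus V(S)}p(v)$; an optimal solution is a tree minimizing $C$. $T_p:=\{v\in V:p(v)>0\}$. A prize-constrained $(v_i,v_j)$-walk is a finite walk $W=(v_{i_1},e_{i_1},\dots,e_{i_{r-1}},v_{i_r})$ with $v_{i_1}=v_i$, $v_{i_r}=v_j$ in which no vertex of $T_p\cup\{v_i,v_j\}$ occurs more than once. $V(W),E(W)$ are its vertex and edge sets; for $1\le k\le r$, $W[1,k]$ is the initial subwalk $(v_{i_1},\dots,v_{i_k})$. For a walk $W$ from $a$ to $b$, $c_{pc}(W):=\sum_{e\in E(W)}c(e)-\sum_{v\in V(W)\setminus\{a,b\}}p(v)$. The left-rooted prize-constrained length is $l^-_{pc}(W):=\max\{c_{pc}(W[1,k]): 1\le k\le r,\ v_{i_k}\in T_p\cup\{v_j\}\}$, and the left-rooted prize-constrained distance is $d^-_{pc}(v_i,v_j):=\inf\{l^-_{pc}(W): W\text{ a prize-constrained }(v_i,v_j)\text{-walk}\}$ (not symmetric in general). *)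

From HB Require Import structures.
From mathcomp Require Import all_boot all_order all_algebra.
Set Implicit Arguments. Unset Strict Implicit. Unset Printing Implicit Defensive.
Import Order.TTheory GRing.Theory Num.Theory.
Local Open Scope ring_scope.

(* An undirected (multi)graph: finite vertex type V, finite edge type E,
   each edge e joins the endpoints src e and dst e. Costs c : E -> rat,
   prizes p : V -> rat. *)
Section PCSTP.
Variables (V E : finType) (src dst : E -> V).

Definition joins (e : E) (x y : V) : bool :=
  ((src e == x) && (dst e == y)) || ((src e == y) && (dst e == x)).

(* A walk starting at x is given by its sequence of steps (edge, next vertex). *)
Fixpoint is_walk (x : V) (s : seq (E * V)) : bool :=
  if s is (e, y) :: s' then joins e x y && is_walk y s' else true.

Definition wverts (x : V) (s : seq (E * V)) : seq V := x :: map snd s.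
Definition wedges (s : seq (E * V)) : seq E := map fst s.
Definition wend (x : V) (s : seq (E * V)) : V := last x (map snd s).

Definition connected_graph : Prop :=
  forall x y : V, exists s, is_walk x s /\ wend x s = y.

Variables (c : E -> rat) (p : V -> rat).

Definition Tp : pred V := fun v => 0 < p v.

Definition pc_walk (vi vj : V) (s : seq (E * V)) : Prop :=
  [/\ is_walk vi s, wend vi s = vj &
      forall v, (Tp v || (v == vi) || (v == vj)) -> count_mem v (wverts vi s) <= 1]%N.

(* c_pc of the walk (a, s) from a to its end b: edge SET and vertex SET *)
Definition cpc (a : V) (s : seq (E * V)) : rat :=
  \sum_(e <- undup (wedges s)) c e
  - \sum_(v <- undup (wverts a s) | (v != a) && (v != wend a s)) p v.

(* left-rooted prize-constrained length; the prefix W[1,k] (k vertices)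
   corresponds to take (k-1) s. The maximum ranges over a set that always
   contains the full walk (k = r, ending at vj), whose value is the seed. *)
Definition lpc (vi vj : V) (s : seq (E * V)) : rat :=
  \big[Num.max/cpc vi s]_(k <- iota 0 (size s).+1
       | Tp (wend vi (take k s)) || (wend vi (take k s) == vj))
     cpc vi (take k s).

Definition is_dpc (vi vj : V) (d : rat) : Prop :=
  (forall s, pc_walk vi vj s -> d <= lpc vi vj s) /\
  (forall d', (forall s, pc_walk vi vj s -> d' <= lpc vi vj s) -> d' <= d).

Definition in_sub (VS : {set V}) (ES : {set E}) (x : V) (s : seq (E * V)) : bool :=
  is_walk x s && all (fun e => e \in ES) (wedges s) && all (fun v => v \in VS) (wverts x s).

Definition is_cycle (VS : {set V}) (ES : {set E}) (x : V) (s : seq (E * V)) : bool :=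
  [&& in_sub VS ES x s, s != [::], wend x s == x, uniq (wedges s) & uniq (map snd s)].

Definition is_tree (VS : {set V}) (ES : {set E}) : Prop :=
  [/\ VS != set0,
      forall e, e \in ES -> (src e \in VS) && (dst e \in VS),
      forall x y, x \in VS -> y \in VS -> exists s, in_sub VS ES x s /\ wend x s = y
    & forall x s, ~~ is_cycle VS ES x s].

Definition cost (VS : {set V}) (ES : {set E}) : rat :=
  \sum_(e in ES) c e + \sum_(v in ~: VS) p v.

Definition optimal (VS : {set V}) (ES : {set E}) : Prop :=
  is_tree VS ES /\ forall VS' ES', is_tree VS' ES' -> cost VS ES <= cost VS' ES'.

End PCSTP.

From Pilot Require Import Defs.
From HB Require Import structures.
From mathcomp Require Import all_boot all_order all_algebra.
From mathcomp Require Import lra.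
From Stdlib Require Import Classical.
Set Implicit Arguments. Unset Strict Implicit. Unset Printing Implicit Defensive.
Import Order.TTheory GRing.Theory Num.Theory.
Local Open Scope ring_scope.

(* Suppose an optimal tree S contains vj but not vi.  As d < p vi, some
   prize-constrained walk W from vi to vj has l^-_pc(W) < p vi.  Cut W at its
   shortest prefix W' that ends in T_p or at vj and meets S: every vertex of
   W' in S other than its end carries no prize.  Grafting W' onto S and
   extracting a spanning tree then changes the cost by at most
   c_pc(W') - p vi <= l^-_pc(W) - p vi < 0, contradicting optimality. *)

Section Walks.
Variables (V E : finType) (src dst : E -> V).
Implicit Types (x y : V) (e : E) (s t : seq (E * V)) (VS : {set V}) (ES F : {set E}).
Local Notation joins := (joins src dst).
Local Notation walk := (is_walk src dst).
Local Notation sub_walk := (in_sub src dst).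

Lemma joinsC e x y : joins e x y = joins e y x.
Proof. by rewrite /Defs.joins orbC. Qed.

Lemma joins_ends e a b x y : joins e a b -> joins e x y ->
  (a == x) && (b == y) || (a == y) && (b == x).
Proof.
by rewrite /Defs.joins => /orP[]/andP[/eqP<- /eqP<-] /orP[]/andP[/eqP<- /eqP<-];
  rewrite !eqxx ?orbT.
Qed.

Lemma walk_cat x s t : walk x (s ++ t) = walk x s && walk (wend x s) t.
Proof. by elim: s x => [|[e y] s IH] x //=; rewrite IH andbA. Qed.

Lemma wend_cat x s t : wend x (s ++ t) = wend (wend x s) t.
Proof. by rewrite /wend map_cat last_cat. Qed.

Lemma wverts_prefix x s v : v \in wverts x s ->
  exists t u, s = t ++ u /\ wend x t = v.
Proof.
elim: s x => [|[e y] s IH] x; first by rewrite inE => /eqP ->; exists [::], [::].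
rewrite inE => /orP[/eqP ->|/IH[t [u [-> <-]]]]; first by exists [::], ((e, y) :: s).
by exists ((e, y) :: t), u.
Qed.

Lemma walk_edge_ends x s e : walk x s -> e \in wedges s ->
  (src e \in wverts x s) && (dst e \in wverts x s).
Proof.
elim: s x => [|[f y] s IH] x //= /andP[J Hs]; rewrite inE => /orP[/eqP ->|/(IH y Hs)].
  by case/orP: J => /andP[/eqP -> /eqP ->]; rewrite !inE !eqxx ?orbT.
by rewrite !(in_cons x) => /andP[-> ->]; rewrite !orbT.
Qed.

Lemma sub_walk_nil VS ES x : sub_walk VS ES x [::] = (x \in VS).
Proof. by rewrite /in_sub /= andbT. Qed.

Lemma sub_walk_cons VS ES x e y s : sub_walk VS ES x ((e, y) :: s) =
  [&& joins e x y, e \in ES, x \in VS & sub_walk VS ES y s].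
Proof.
rewrite /in_sub /=.
by case: (joins _ _ _); case: (walk _ _); case: (e \in ES); case: (x \in VS);
  case: (y \in VS); case: (all _ _); case: (all _ _).
Qed.

Lemma sub_walk_head VS ES x s : sub_walk VS ES x s -> x \in VS.
Proof. by case: s => [|[e y] s]; rewrite ?sub_walk_nil ?sub_walk_cons // => /and4P[]. Qed.

Lemma sub_walk_cat VS ES x s t :
  sub_walk VS ES x (s ++ t) = sub_walk VS ES x s && sub_walk VS ES (wend x s) t.
Proof.
elim: s x => [|[e y] s IH] x /=; last by rewrite !sub_walk_cons IH !andbA.
by rewrite sub_walk_nil; apply/idP/andP => [H|[]//]; rewrite (sub_walk_head H).
Qed.

Lemma sub_walk_subset VS ES VS' ES' x s : VS \subset VS' -> ES \subset ES' ->
  sub_walk VS ES x s -> sub_walk VS' ES' x s.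
Proof.
move=> /subsetP sV /subsetP sE; elim: s x => [|[e y] s IH] x.
  by rewrite !sub_walk_nil => /sV.
by rewrite !sub_walk_cons => /and4P[-> /sE -> /sV -> /IH ->].
Qed.

Lemma sub_walk_setD1 VS ES x s e : sub_walk VS ES x s -> e \notin wedges s ->
  sub_walk VS (ES :\ e) x s.
Proof.
elim: s x => [|[f y] s IH] x; first by rewrite !sub_walk_nil.
rewrite !sub_walk_cons inE negb_or => /and4P[-> fE -> Hs] /andP[fe He].
by rewrite in_setD1 eq_sym fe fE IH.
Qed.

Lemma sub_walk_trace x s : walk x s ->
  sub_walk [set v | v \in wverts x s] [set e | e \in wedges s] x s.
Proof.
by move=> Hw; rewrite /in_sub Hw; apply/andP; split; [apply/andP; split=> //|];
  apply/allP => z; rewrite inE.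
Qed.

Fixpoint rev_walk x s : seq (E * V) :=
  if s is (e, y) :: s' then rcons (rev_walk y s') (e, x) else [::].

Lemma sub_walk_rev VS ES x s : sub_walk VS ES x s ->
  sub_walk VS ES (wend x s) (rev_walk x s) /\ wend (wend x s) (rev_walk x s) = x.
Proof.
elim: s x => [|[e y] s IH] x /=; first by rewrite sub_walk_nil.
rewrite sub_walk_cons => /and4P[J eE xV /[dup] /IH[H1 H2] Hs].
rewrite -cats1 sub_walk_cat wend_cat H2 H1 sub_walk_cons sub_walk_nil joinsC.
by rewrite J eE xV (sub_walk_head Hs).
Qed.

Lemma first_hit (P : pred V) VS x s : wend x s \in VS ->
  exists t u, [/\ s = t ++ u, P (wend x t) || (wend x t == wend x s),
    has (mem VS) (wverts x t) &
    forall v, v \in wverts x t -> v \in VS -> P v -> v = wend x t].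
Proof.
move=> endS.
pose hit k := [&& (k <= size s)%N,
  P (wend x (take k s)) || (wend x (take k s) == wend x s) &
  has (mem VS) (wverts x (take k s))].
have wendS t : wend x t \in VS -> has (mem VS) (wverts x t).
  by move=> tS; apply/hasP; exists (wend x t); rewrite // /wend mem_last.
have : exists k, hit k.
  by exists (size s); rewrite /hit take_size leqnn eqxx orbT wendS.
case/ex_minnP => k /and3P[ks Hend Hhas] kmin.
exists (take k s), (drop k s); split; rewrite ?cat_take_drop //.
move=> v /wverts_prefix[t1 [t2 [kE <-]]] vS Pv.
have t1E : take (size t1) s = t1 by rewrite -(cat_take_drop k s) kE -catA take_size_cat.
have sizeE : k = (size t1 + size t2)%N by rewrite -size_cat -kE size_takel.
have hit_t1 : hit (size t1).
  by rewrite /hit t1E Pv wendS // (leq_trans _ ks) // sizeE leq_addr.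
have t2E : t2 = [::].
  by apply/eqP; rewrite -size_eq0 -leqn0 -(leq_add2l (size t1)) addn0 -sizeE kmin.
by rewrite kE t2E cats0.
Qed.

Definition closed_sub VS ES : Prop :=
  forall e, e \in ES -> (src e \in VS) && (dst e \in VS).

Definition connected_sub VS ES : Prop :=
  forall x y, x \in VS -> y \in VS -> exists s, sub_walk VS ES x s /\ wend x s = y.

Lemma closed_subU VS1 ES1 VS2 ES2 : closed_sub VS1 ES1 -> closed_sub VS2 ES2 ->
  closed_sub (VS1 :|: VS2) (ES1 :|: ES2).
Proof. by move=> C1 C2 e /setUP[/C1|/C2] /andP[se de]; rewrite !inE se de ?orbT. Qed.

Lemma closed_sub_trace x s : walk x s ->
  closed_sub [set v | v \in wverts x s] [set e | e \in wedges s].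
Proof. by move=> Hw e; rewrite !inE => /(walk_edge_ends Hw). Qed.

Lemma connected_sub_hub VS ES w :
  (forall u, u \in VS -> exists s, sub_walk VS ES u s /\ wend u s = w) ->
  connected_sub VS ES.
Proof.
move=> hub x y xV yV; have [sx [Hx Ex]] := hub x xV; have [sy [Hy Ey]] := hub y yV.
have [R ER] := sub_walk_rev Hy; rewrite Ey in R ER.
by exists (sx ++ rev_walk y sy); rewrite sub_walk_cat wend_cat Ex Hx R ER.
Qed.

Lemma connected_subU VS1 ES1 VS2 ES2 w :
  connected_sub VS1 ES1 -> connected_sub VS2 ES2 -> w \in VS1 -> w \in VS2 ->
  connected_sub (VS1 :|: VS2) (ES1 :|: ES2).
Proof.
move=> C1 C2 w1 w2; apply: (@connected_sub_hub _ _ w) => u /setUP[uV|uV].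
  have [s [Hs Es]] := C1 u w uV w1; exists s; split=> //.
  exact: sub_walk_subset (subsetUl _ _) (subsetUl _ _) Hs.
have [s [Hs Es]] := C2 u w uV w2; exists s; split=> //.
exact: sub_walk_subset (subsetUr _ _) (subsetUr _ _) Hs.
Qed.

Lemma connected_sub_trace x s : walk x s ->
  connected_sub [set v | v \in wverts x s] [set e | e \in wedges s].
Proof.
move=> Hw; have := sub_walk_trace Hw.
set VT := [set v | _]; set ET := [set e | _] => Hs.
apply: (@connected_sub_hub _ _ x) => u; rewrite inE.
case/wverts_prefix => t [t' [st <-]].
move: Hs; rewrite [in sub_walk _ _ _ s]st sub_walk_cat => /andP[/sub_walk_rev[R ER] _].
by exists (rev_walk x t).
Qed.

Lemma sub_walk_bypass VS F e x y P : joins e x y ->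
  sub_walk VS (F :\ e) y P -> wend y P = x ->
  forall a w, sub_walk VS F a w ->
  exists2 w', sub_walk VS (F :\ e) a w' & wend a w' = wend a w.
Proof.
move=> J HP EP; have [HR ER] := sub_walk_rev HP; rewrite EP in HR ER.
move=> a w; elim: w a => [|[f b] w IH] a; first by exists [::].
rewrite sub_walk_cons => /and4P[Jf fF aV /IH[w' Hw' Ew']].
have -> : wend a ((f, b) :: w) = wend b w by [].
rewrite -Ew'; have [fe|fne] := eqVneq f e; last first.
  by exists ((f, b) :: w'); rewrite // sub_walk_cons Jf in_setD1 fne fF aV Hw'.
rewrite fe in Jf; case/orP: (joins_ends Jf J) => /andP[/eqP aE /eqP bE]; subst a b.
  by exists (rev_walk y P ++ w'); rewrite ?sub_walk_cat ?wend_cat ER ?HR.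
by exists (P ++ w'); rewrite ?sub_walk_cat ?wend_cat EP ?HP.
Qed.

Lemma connected_sub_setD1_cycle VS F x s : is_cycle src dst VS F x s ->
  connected_sub VS F -> exists2 e, e \in F & connected_sub VS (F :\ e).
Proof.
case/and5P; case: s => [|[e y] s] // + _ /eqP Es /andP[eNs _] _.
rewrite sub_walk_cons => /and4P[J eF _ Hs] C; exists e => // a b aV bV.
have [w [Hw <-]] := C a b aV bV.
have [w' ? ?] := sub_walk_bypass J (sub_walk_setD1 Hs eNs) Es Hw.
by exists w'.
Qed.

Lemma spanning_tree VS F : VS != set0 -> closed_sub VS F -> connected_sub VS F ->
  exists2 T : {set E}, T \subset F & is_tree src dst VS T.
Proof.
have [n] := ubnP #|F|; elim: n F => // n IH F ltFn VSne CF CoF.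
have [[x [s cyc]]|acyclic] := classic (exists x s, is_cycle src dst VS F x s); last first.
  exists F => //; split=> // x s; apply/negP => cyc; apply: acyclic; by exists x, s.
have [e eF CoFe] := connected_sub_setD1_cycle cyc CoF.
have [||T TF treeT] := IH (F :\ e) _ VSne _ CoFe.
- by rewrite (cardsD1 e F) eF in ltFn.
- by move=> f /setD1P[_ /CF].
exists T => //; exact: subset_trans TF (subsetDl F [set e]).
Qed.

End Walks.

Lemma sumr_subset_le (R : numDomainType) (T : finType) (A B : {set T}) (f : T -> R) :
  (forall x, 0 <= f x) -> A \subset B -> \sum_(x in A) f x <= \sum_(x in B) f x.
Proof.
move=> f0 /setIidPr BA.
by rewrite [X in _ <= X](big_setID (A := B) A) BA lerDl sumr_ge0.
Qed.

Lemma sumr_setU_le (R : numDomainType) (T : finType) (A B : {set T}) (f : T -> R) :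
  (forall x, 0 <= f x) ->
  \sum_(x in A :|: B) f x <= \sum_(x in A) f x + \sum_(x in B) f x.
Proof.
move=> f0; rewrite (big_setID (A := A :|: B) A) setUK lerD2l sumr_subset_le //.
by apply/subsetP => x; rewrite !inE; case: (x \in A).
Qed.

Lemma sum_undup_cond (R : nmodType) (T : finType) (s : seq T) (P : pred T) (f : T -> R) :
  \sum_(x <- undup s | P x) f x = \sum_(x | (x \in s) && P x) f x.
Proof.
rewrite -big_filter big_uniq ?filter_uniq ?undup_uniq //.
by apply: eq_bigl => x; rewrite mem_filter mem_undup andbC.
Qed.

Lemma lpc_ge_prefix (V E : finType) (c : E -> rat) (p : V -> rat) vi vj
    (t u : seq (E * V)) :
  Tp p (wend vi t) || (wend vi t == vj) -> cpc c p vi t <= lpc c p vi vj (t ++ u).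
Proof.
move=> Ht; have tE : take (size t) (t ++ u) = t by rewrite take_size_cat.
rewrite -[in cpc _ _ _ t]tE; apply: le_bigmax_seq; last by rewrite tE.
by rewrite mem_iota add0n ltnS size_cat leq_addr.
Qed.

Lemma is_dpc_walk_lt (V E : finType) (src dst : E -> V) (c : E -> rat) (p : V -> rat)
    vi vj d a :
  is_dpc src dst c p vi vj d -> d < a ->
  exists s, pc_walk src dst p vi vj s /\ lpc c p vi vj s < a.
Proof.
move=> [_ glb] lt_da; apply: NNPP => none; move: lt_da; rewrite ltNge => /negP; apply.
by apply: glb => s Hs; rewrite leNgt; apply/negP => lt_sa; apply: none; exists s.
Qed.

Section Cost.
Variables (V E : finType) (src dst : E -> V) (c : E -> rat) (p : V -> rat).
Hypothesis c_ge0 : forall e, 0 <= c e.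

Lemma graft_walk (VS : {set V}) (ES : {set E}) a (t : seq (E * V)) :
  is_tree src dst VS ES -> is_walk src dst a t -> has (mem VS) (wverts a t) ->
  exists VS' ES', is_tree src dst VS' ES' /\
    cost c p VS' ES' <= cost c p VS ES + \sum_(e <- undup (wedges t)) c e
                        - \sum_(v | (v \in wverts a t) && (v \notin VS)) p v.
Proof.
move=> [VSne CS CoS _] Hw /hasP[w wt wV]; have {}wV : w \in VS := wV.
set VT := [set v | v \in wverts a t]; set ET := [set e | e \in wedges t].
have [T TS treeT] :
    exists2 T : {set E}, T \subset ES :|: ET & is_tree src dst (VS :|: VT) T.
  apply: spanning_tree.
  - by apply/set0Pn; exists w; rewrite in_setU wV.
  - exact: closed_subU CS (closed_sub_trace Hw).
  - by apply: connected_subU CoS (connected_sub_trace Hw) wV _; rewrite inE.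
exists (VS :|: VT), T; split=> //.
have edges : \sum_(e in T) c e <= \sum_(e in ES) c e + \sum_(e <- undup (wedges t)) c e.
  have -> : \sum_(e <- undup (wedges t)) c e = \sum_(e in ET) c e.
    by rewrite big_uniq ?undup_uniq //; apply: eq_bigl => e; rewrite inE mem_undup.
  exact: le_trans (sumr_subset_le c_ge0 TS) (sumr_setU_le _ _ c_ge0).
have verts : \sum_(v in ~: VS) p v = \sum_(v in ~: (VS :|: VT)) p v
                + \sum_(v | (v \in wverts a t) && (v \notin VS)) p v.
  rewrite (bigID [in VT]) /= addrC.
  by congr (_ + _); apply: eq_big => // v; rewrite !inE;
    case: (v \in VS); rewrite /= ?andbT ?andbF.
rewrite /cost; lra.
Qed.

Lemma prize_off_tree_ge (VS : {set V}) a (t : seq (E * V)) :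
  (forall v, 0 <= p v) -> a \notin VS ->
  (forall v, v \in wverts a t -> v \in VS -> Tp p v -> v = wend a t) ->
  p a + \sum_(v <- undup (wverts a t) | (v != a) && (v != wend a t)) p v
    <= \sum_(v | (v \in wverts a t) && (v \notin VS)) p v.
Proof.
move=> p_ge0 aNS first.
rewrite sum_undup_cond [X in _ <= X](bigD1 a) /=; last by rewrite mem_head aNS.
rewrite lerD2l big_mkcond [X in _ <= X]big_mkcond /=; apply: ler_sum => v _.
case: ifPn => [/andP[vt /andP[va vend]]|_]; last by case: ifP.
have [vS|vNS] := boolP (v \in VS); last by rewrite vt va.
rewrite vt /= leNgt; apply/negP => /(first v vt vS) vE.
by rewrite vE eqxx in vend.
Qed.

End Cost.

Theorem proposition5 (V E : finType) (src dst : E -> V) (c : E -> rat) (p : V -> rat)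
  (Hconn : connected_graph src dst)
  (Hc : forall e, 0 < c e) (Hp : forall v, 0 <= p v)
  (vi vj : V) (d : rat) (Hd : is_dpc src dst c p vi vj d) (Hlt : d < p vi) :
  forall (VS : {set V}) (ES : {set E}),
    optimal src dst c p VS ES -> vj \in VS -> vi \in VS.
Proof.
move=> VS ES [tree opt] vjS; apply: contraT => viNS.
have [s [[Hw Hend _] lt_s]] := is_dpc_walk_lt Hd Hlt.
rewrite -Hend in vjS.
have [t [u [st Ht tS first]]] := first_hit (Tp p) vjS.
have t_walk : is_walk src dst vi t by move: Hw; rewrite st walk_cat => /andP[].
have [VS' [ES' [tree' cost']]] := graft_walk p (fun e => ltW (Hc e)) tree t_walk tS.
have gain := prize_off_tree_ge Hp viNS first.
have lpc_t : cpc c p vi t <= lpc c p vi vj s by rewrite st lpc_ge_prefix // -Hend.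
have := opt _ _ tree'; rewrite /cpc in lpc_t; lra.
Qed.
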